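(* Let $f:\mathbf{R}\to\mathbf{R}$ be either a discontinuous additive function or an everywhere surjective function. Then the path-connected components of the hypograph $H_f=\{(x,y)\in\mathbf{R}^2: y\le f(x)\}$ are exactly the vertical closed half-lines $\{(x_0,y): y\le f(x_0)\}$, $x_0\in\mathbf{R}$. In particular $H_f$ is not path-connected and has uncountably many path components (while being connected).
   Context: A function $f:\mathbf{R}\to\mathbf{R}$ is additive if $f(x+y)=f(x)+f(y)$ for all $x,y$. It is everywhere surjective if for every open interval $(a,b)$ with $a<b$ and every $y\in\mathbf{R}$ there exists $x\in(a,b)$ with $f(x)=y$. The hypograph of $f$ is $\{(x,y)\in\mathbf{R}^2 : y\le f(x)\}$, with the subspace topology from $\mathbf{R}^2$. *)

From Stdlib Require Import Reals.
Open Scope R_scope.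

Definition additive (f : R -> R) : Prop :=
  forall x y, f (x + y) = f x + f y.

Definition everywhere_surjective (f : R -> R) : Prop :=
  forall a b y, a < b -> exists x, a < x < b /\ f x = y.

Definition hypograph (f : R -> R) (p : R * R) : Prop := snd p <= f (fst p).

Definition continuous_on01 (g : R -> R) : Prop :=
  forall t, 0 <= t <= 1 -> forall eps, 0 < eps ->
    exists delta, 0 < delta /\
      forall s, 0 <= s <= 1 -> Rabs (s - t) < delta -> Rabs (g s - g t) < eps.

(* p and q are joined by a path in S: a continuous map [0,1] -> R^2
   (continuity into R^2 = continuity of both coordinates) with values in S. *)
Definition path_joined (S : R * R -> Prop) (p q : R * R) : Prop :=
  exists g1 g2 : R -> R,
    continuous_on01 g1 /\ continuous_on01 g2 /\
    (g1 0, g2 0) = p /\ (g1 1, g2 1) = q /\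
    forall t, 0 <= t <= 1 -> S (g1 t, g2 t).

Definition path_connected (S : R * R -> Prop) : Prop :=
  forall p q, S p -> S q -> path_joined S p q.

Definition open2 (U : R * R -> Prop) : Prop :=
  forall p, U p -> exists r, 0 < r /\
    forall q, Rabs (fst q - fst p) < r -> Rabs (snd q - snd p) < r -> U q.

Definition connected2 (S : R * R -> Prop) : Prop :=
  forall U V : R * R -> Prop, open2 U -> open2 V ->
    (forall p, S p -> U p \/ V p) ->
    (forall p, S p -> U p -> V p -> False) ->
    (exists p, S p /\ U p) -> (exists p, S p /\ V p) -> False.

(* S has at most countably many path components: some sequence of points of S
   meets every path component. *)
Definition countably_many_path_components (S : R * R -> Prop) : Prop :=
  exists c : nat -> R * R, (forall n, S (c n)) /\
    forall p, S p -> exists n, path_joined S (c n) p.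

(* Both hypotheses make f unbounded above and below on every open interval (an additive
   function bounded above on an interval is continuous).  The second coordinate of a path in
   the hypograph is bounded below, so its first coordinate cannot move: by the intermediate
   value theorem it would pass through some x at which f is below that bound.  For connectedness, a
   separation of the hypograph cannot split a vertical half-line, and since f is unbounded
   above the half-lines over nearby points reach common heights, so the separation would
   split the real line. *)

From Stdlib Require Import Reals Lra Classical ClassicalEpsilon.
Open Scope R_scope.

Lemma continuity_pt_intro (g : R -> R) x :
  (forall eps, 0 < eps -> exists delta, 0 < delta /\
     forall y, Rabs (y - x) < delta -> Rabs (g y - g x) < eps) ->
  continuity_pt g x.
Proof.
  intros hg eps heps. destruct (hg eps heps) as [delta [hdelta hy]].
  exists delta. split; [exact hdelta|]. intros y [_ hyx]. exact (hy y hyx).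
Qed.

Section Additive.

Variable f : R -> R.
Hypothesis hf : additive f.

Lemma additive_0 : f 0 = 0.
Proof. pose proof (hf 0 0) as h. rewrite Rplus_0_r in h. lra. Qed.

Lemma additive_opp x : f (- x) = - f x.
Proof. pose proof (hf x (- x)) as h. rewrite Rplus_opp_r, additive_0 in h. lra. Qed.

Lemma additive_sub x y : f (x - y) = f x - f y.
Proof. unfold Rminus. rewrite hf, additive_opp. reflexivity. Qed.

Lemma additive_INR_mult n x : f (INR n * x) = INR n * f x.
Proof.
  induction n as [|n IH].
  - rewrite !Rmult_0_l. exact additive_0.
  - rewrite S_INR, Rmult_plus_distr_r, Rmult_1_l, hf, IH. ring.
Qed.

(* If [|f| <= K] on [(-d, d)] then [|f h| <= K / N] for [|h| < d / N], since [f (N h) = N f h]. *)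
Lemma additive_continuity_of_bounded_near_0 d K :
  0 < d -> (forall h, Rabs h < d -> Rabs (f h) <= K) -> continuity f.
Proof.
  intros hd hK x. apply continuity_pt_intro. intros eps heps.
  destruct (INR_unbounded (Rmax 0 (K / eps))) as [N hN].
  assert (hN0 : 0 < INR N) by (pose proof (Rmax_l 0 (K / eps)); lra).
  assert (hKN : K < INR N * eps).
  { pose proof (Rmax_r 0 (K / eps)).
    apply (Rmult_lt_reg_r (/ eps)); [apply Rinv_0_lt_compat; lra|].
    replace (INR N * eps * / eps) with (INR N) by (field; lra). unfold Rdiv in *. lra. }
  exists (d / INR N). split; [apply Rdiv_lt_0_compat; lra|].
  intros y hy. rewrite <- additive_sub.
  assert (hNy : Rabs (INR N * (y - x)) < d).
  { rewrite Rabs_mult, (Rabs_right (INR N)) by lra.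
    apply (Rmult_lt_compat_l (INR N)) in hy; [|exact hN0].
    replace (INR N * (d / INR N)) with d in hy by (field; lra). exact hy. }
  specialize (hK _ hNy). rewrite additive_INR_mult, Rabs_mult, (Rabs_right (INR N)) in hK by lra.
  nra.
Qed.

(* Around the midpoint [c] of [(a, b)], [f h = f (c + h) - f c] and [f (- h) = - f h]. *)
Lemma additive_continuity_of_bounded_above a b M :
  a < b -> (forall x, a < x < b -> f x <= M) -> continuity f.
Proof.
  intros hab hM. set (c := (a + b) / 2).
  apply (additive_continuity_of_bounded_near_0 ((b - a) / 2) (M - f c)); [lra|].
  intros h hh. apply Rabs_def2 in hh.
  assert (hplus : f (c + h) <= M) by (apply hM; unfold c; lra).
  assert (hminus : f (c + - h) <= M) by (apply hM; unfold c; lra).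
  rewrite hf in hplus, hminus. rewrite additive_opp in hminus.
  apply Rabs_le. lra.
Qed.

End Additive.

Definition locally_unbounded_above (f : R -> R) : Prop :=
  forall a b M, a < b -> exists x, a < x < b /\ M < f x.

Definition locally_unbounded_below (f : R -> R) : Prop :=
  locally_unbounded_above (fun x => - f x).

Lemma discontinuous_additive_locally_unbounded_above f :
  additive f -> ~ continuity f -> locally_unbounded_above f.
Proof.
  intros hf hc a b M hab. apply NNPP. intros hnot. apply hc.
  apply (additive_continuity_of_bounded_above f hf a b M hab).
  intros x hx. apply Rnot_lt_le. intros hlt. apply hnot. exists x. split; assumption.
Qed.

Lemma discontinuous_additive_locally_unbounded_below f :
  additive f -> ~ continuity f -> locally_unbounded_below f.
Proof.
  intros hf hc. apply discontinuous_additive_locally_unbounded_above.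
  - intros x y. rewrite hf. ring.
  - intros hopp. apply hc. intros x.
    apply (continuity_pt_locally_ext (fun y => - - f y) f 1);
      [lra | intros y _; ring | exact (continuity_opp _ hopp x)].
Qed.

Lemma everywhere_surjective_locally_unbounded f :
  everywhere_surjective f -> locally_unbounded_above f /\ locally_unbounded_below f.
Proof.
  intros hf. split; intros a b M hab.
  - destruct (hf a b (M + 1) hab) as [x [hx fx]]. exists x. split; [exact hx | lra].
  - destruct (hf a b (- M - 1) hab) as [x [hx fx]]. exists x. split; [exact hx | lra].
Qed.

(* [continuous_on01] is [continuous_on 0 1] up to conversion. *)
Definition continuous_on (a b : R) (g : R -> R) : Prop :=
  forall t, a <= t <= b -> forall eps, 0 < eps ->
    exists delta, 0 < delta /\
      forall s, a <= s <= b -> Rabs (s - t) < delta -> Rabs (g s - g t) < eps.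

(* Composing with [clamp a b] extends a function continuous on [[a, b]] to a continuous
   function on [R], to which Stdlib's intermediate and extreme value theorems apply. *)
Definition clamp (a b t : R) : R := Rmax a (Rmin b t).

Lemma clamp_in a b t : a <= b -> a <= clamp a b t <= b.
Proof. intros hab. unfold clamp, Rmax, Rmin. repeat destruct Rle_dec; lra. Qed.

Lemma clamp_id a b t : a <= t <= b -> clamp a b t = t.
Proof. intros ht. unfold clamp, Rmax, Rmin. repeat destruct Rle_dec; lra. Qed.

Lemma clamp_dist a b s t : a <= b -> Rabs (clamp a b s - clamp a b t) <= Rabs (s - t).
Proof.
  intros hab. unfold clamp, Rmax, Rmin, Rabs.
  repeat (destruct Rle_dec || destruct Rcase_abs); lra.
Qed.

Lemma continuity_clamp a b g :
  a <= b -> continuous_on a b g -> continuity (fun t => g (clamp a b t)).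
Proof.
  intros hab hg t. apply continuity_pt_intro. intros eps heps.
  destruct (hg _ (clamp_in a b t hab) eps heps) as [delta [hdelta hclose]].
  exists delta. split; [exact hdelta|]. intros s hs.
  apply hclose; [apply clamp_in, hab|].
  pose proof (clamp_dist a b s t hab). lra.
Qed.

Lemma continuous_on_IVT a b g y :
  a <= b -> continuous_on a b g -> (g a <= y <= g b \/ g b <= y <= g a) ->
  exists c, a <= c <= b /\ g c = y.
Proof.
  intros hab hg hy.
  assert (hcont : continuity (fun t => g (clamp a b t) - y)).
  { apply continuity_minus; [exact (continuity_clamp a b g hab hg) | apply continuity_const; intros ? ?; reflexivity]. }
  destruct (IVT_cor _ a b hcont hab) as [c [hc gc]].
  { rewrite !clamp_id by lra. nra. }
  exists c. split; [exact hc|]. rewrite clamp_id in gc by exact hc. lra.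
Qed.

Lemma continuous_on_bounded_below a b g :
  a <= b -> continuous_on a b g -> exists m, forall t, a <= t <= b -> m <= g t.
Proof.
  intros hab hg.
  destruct (continuity_ab_min (fun t => g (clamp a b t)) a b hab) as [t0 [hmin _]].
  { intros c _. exact (continuity_clamp a b g hab hg c). }
  exists (g (clamp a b t0)). intros t ht. rewrite <- (clamp_id a b t ht). apply hmin, ht.
Qed.

(* The indicator of [Q] would be a continuous function taking the values [0] and [1] but not [1/2]. *)
Lemma interval_not_separated a b (P Q : R -> Prop) :
  open_set P -> open_set Q ->
  (forall x, Rmin a b <= x <= Rmax a b -> P x \/ Q x) ->
  (forall x, Rmin a b <= x <= Rmax a b -> P x -> Q x -> False) ->
  P a -> Q b -> False.
Proof.
  intros hP hQ hcover hdisj Pa Qb.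
  set (chi := fun x => if excluded_middle_informative (Q x) then 1 else 0).
  assert (chi_P : forall x, Rmin a b <= x <= Rmax a b -> P x -> chi x = 0).
  { intros x hx Px. unfold chi. destruct excluded_middle_informative as [Qx|]; [|reflexivity].
    destruct (hdisj x hx Px Qx). }
  assert (chi_Q : forall x, Q x -> chi x = 1).
  { intros x Qx. unfold chi. destruct excluded_middle_informative; [reflexivity | contradiction]. }
  assert (hchi : continuous_on (Rmin a b) (Rmax a b) chi).
  { intros t ht eps heps.
    destruct (hcover t ht) as [Pt|Qt].
    - destruct (hP t Pt) as [[r hr] hdisc]. exists r. split; [exact hr|].
      intros s hs hst. rewrite (chi_P s hs (hdisc s hst)), (chi_P t ht Pt).
      rewrite Rminus_0_r, Rabs_R0. exact heps.
    - destruct (hQ t Qt) as [[r hr] hdisc]. exists r. split; [exact hr|].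
      intros s hs hst. rewrite (chi_Q s (hdisc s hst)), (chi_Q t Qt).
      rewrite Rminus_diag, Rabs_R0. exact heps. }
  assert (chi_a : chi a = 0).
  { apply chi_P; [split; [apply Rmin_l | apply Rmax_l] | exact Pa]. }
  assert (chi_b : chi b = 1) by exact (chi_Q b Qb).
  assert (no_half : forall c, chi c <> 1 / 2).
  { intros c. unfold chi. destruct excluded_middle_informative; lra. }
  destruct (Rle_dec a b) as [hab|hba].
  - rewrite Rmin_left, Rmax_right in hchi by exact hab.
    destruct (continuous_on_IVT a b chi (1 / 2) hab hchi) as [c [_ hc]]; [lra|].
    exact (no_half c hc).
  - rewrite Rmin_right, Rmax_left in hchi by lra.
    destruct (continuous_on_IVT b a chi (1 / 2) ltac:(lra) hchi) as [c [_ hc]]; [lra|].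
    exact (no_half c hc).
Qed.

Lemma continuous_on_const a b c : continuous_on a b (fun _ => c).
Proof.
  intros t _ eps heps. exists 1. split; [lra|].
  intros s _ _. rewrite Rminus_diag, Rabs_R0. exact heps.
Qed.

Lemma continuous_on_affine a b c d : continuous_on a b (fun t => c + t * d).
Proof.
  intros t _ eps heps. exists (eps / (Rabs d + 1)).
  assert (hd : 0 < Rabs d + 1) by (pose proof (Rabs_pos d); lra).
  split; [apply Rdiv_lt_0_compat; lra|].
  intros s _ hst. replace (c + s * d - (c + t * d)) with ((s - t) * d) by ring.
  rewrite Rabs_mult.
  apply (Rmult_lt_compat_r (Rabs d + 1)) in hst; [|exact hd].
  replace (eps / (Rabs d + 1) * (Rabs d + 1)) with eps in hst by (field; lra).
  pose proof (Rabs_pos (s - t)). nra.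
Qed.

Lemma path_joined_vertical f x y1 y2 :
  y1 <= f x -> y2 <= f x -> path_joined (hypograph f) (x, y1) (x, y2).
Proof.
  intros h1 h2. exists (fun _ => x), (fun t => y1 + t * (y2 - y1)).
  split; [apply continuous_on_const|]. split; [apply continuous_on_affine|].
  split; [f_equal; ring|]. split; [f_equal; ring|].
  intros t ht. unfold hypograph; simpl. nra.
Qed.

(* The second coordinate of a path is bounded below by some [m]; if the first one moved,
   it would pass through a point [x] with [f x < m]. *)
Lemma path_joined_hypograph_fst f p q :
  locally_unbounded_below f -> path_joined (hypograph f) p q -> fst p = fst q.
Proof.
  intros hf [g1 [g2 [hg1 [hg2 [<- [<- hin]]]]]]. simpl.
  destruct (continuous_on_bounded_below 0 1 g2 ltac:(lra) hg2) as [m hm].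
  apply NNPP. intros hne.
  destruct (hf (Rmin (g1 0) (g1 1)) (Rmax (g1 0) (g1 1)) (- m)) as [x [hx fx]].
  { unfold Rmin, Rmax. destruct Rle_dec; destruct (Req_dec (g1 0) (g1 1)); lra. }
  destruct (continuous_on_IVT 0 1 g1 x ltac:(lra) hg1) as [c [hc g1c]].
  { unfold Rmin, Rmax in hx. destruct Rle_dec in hx; lra. }
  specialize (hin c hc). specialize (hm c hc). unfold hypograph in hin; simpl in hin.
  rewrite g1c in hin. lra.
Qed.

Lemma hypograph_path_joined_iff f p q :
  locally_unbounded_below f -> hypograph f p -> hypograph f q ->
  path_joined (hypograph f) p q <-> fst p = fst q.
Proof.
  intros hf hp hq. split; [apply path_joined_hypograph_fst, hf|].
  destruct p as [x y1], q as [x' y2]; simpl. intros <-. apply path_joined_vertical; assumption.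
Qed.

Definition separation (S U V : R * R -> Prop) : Prop :=
  open2 U /\ open2 V /\ (forall p, S p -> U p \/ V p) /\ (forall p, S p -> U p -> V p -> False).

Lemma separation_sym S U V : separation S U V -> separation S V U.
Proof.
  intros (oU & oV & hcover & hdisj). split; [exact oV|]. split; [exact oU|].
  split; [intros p hp; apply or_comm, hcover, hp | intros p hp Vp Up; exact (hdisj p hp Up Vp)].
Qed.

Lemma open2_vertical_section U x : open2 U -> open_set (fun y => U (x, y)).
Proof.
  intros oU y Uy. destruct (oU _ Uy) as [r [hr hbox]]. exists (mkposreal r hr).
  intros y' hy'. apply hbox; simpl; [rewrite Rminus_diag, Rabs_R0; exact hr | exact hy'].
Qed.

Section HypographSeparation.

Variables (f : R -> R) (U V : R * R -> Prop).
Hypothesis hsep : separation (hypograph f) U V.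

Lemma hypograph_vertical_not_separated x y1 y2 :
  y1 <= f x -> y2 <= f x -> U (x, y1) -> V (x, y2) -> False.
Proof.
  destruct hsep as (oU & oV & hcover & hdisj). intros h1 h2 U1 V2.
  assert (hseg : forall y, Rmin y1 y2 <= y <= Rmax y1 y2 -> hypograph f (x, y)).
  { intros y hy. unfold hypograph; simpl. pose proof (Rmax_lub y1 y2 (f x) h1 h2). lra. }
  apply (interval_not_separated y1 y2 (fun y => U (x, y)) (fun y => V (x, y)));
    try apply open2_vertical_section; try assumption.
  - intros y hy. exact (hcover _ (hseg y hy)).
  - intros y hy. exact (hdisj _ (hseg y hy)).
Qed.

Lemma hypograph_vertical_part x y : y <= f x -> U (x, y) -> U (x, f x).
Proof.
  intros hy Uy. destruct hsep as (_ & _ & hcover & _).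
  destruct (hcover (x, f x)) as [Ux|Vx]; [unfold hypograph; simpl; lra | exact Ux|].
  destruct (hypograph_vertical_not_separated x y (f x) hy (Rle_refl _) Uy Vx).
Qed.

(* Near [x0] and [x'], [f] exceeds both [f x0] and [f x'] at some [x''], so the vertical
   half-line at [x''] would meet the boxes around [(x0, f x0)] in [U] and [(x', f x')] in [V]. *)
Lemma hypograph_graph_part_open :
  locally_unbounded_above f -> open_set (fun x => U (x, f x)).
Proof.
  intros hf x0 U0. destruct hsep as (oU & oV & hcover & _).
  destruct (oU _ U0) as [r [hr hboxU]]. exists (mkposreal r hr). intros x' hx'.
  unfold disc in hx'; simpl in hx'.
  destruct (hcover (x', f x')) as [Ux'|Vx']; [unfold hypograph; simpl; lra | exact Ux'|].
  exfalso. destruct (oV _ Vx') as [r' [hr' hboxV]]. simpl in hboxU, hboxV.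
  apply Rabs_def2 in hx'.
  destruct (hf (Rmax (x0 - r) (x' - r')) (Rmin (x0 + r) (x' + r')) (Rmax (f x0) (f x')))
    as [x'' [hx'' fx'']].
  { apply Rmax_lub_lt; apply Rmin_glb_lt; lra. }
  pose proof (Rmax_l (x0 - r) (x' - r')). pose proof (Rmax_r (x0 - r) (x' - r')).
  pose proof (Rmin_l (x0 + r) (x' + r')). pose proof (Rmin_r (x0 + r) (x' + r')).
  pose proof (Rmax_l (f x0) (f x')). pose proof (Rmax_r (f x0) (f x')).
  apply (hypograph_vertical_not_separated x'' (f x0) (f x')); try lra.
  - apply hboxU; simpl; [apply Rabs_def1; lra | rewrite Rminus_diag, Rabs_R0; exact hr].
  - apply hboxV; simpl; [apply Rabs_def1; lra | rewrite Rminus_diag, Rabs_R0; exact hr'].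
Qed.

End HypographSeparation.

Lemma hypograph_connected f : locally_unbounded_above f -> connected2 (hypograph f).
Proof.
  intros hf U V oU oV hcover hdisj [p [hp Up]] [q [hq Vq]].
  assert (hsep : separation (hypograph f) U V) by (repeat split; assumption).
  assert (hgraph : forall x, hypograph f (x, f x)) by (intros x; unfold hypograph; simpl; lra).
  apply (interval_not_separated (fst p) (fst q) (fun x => U (x, f x)) (fun x => V (x, f x))).
  - exact (hypograph_graph_part_open f U V hsep hf).
  - exact (hypograph_graph_part_open f V U (separation_sym _ _ _ hsep) hf).
  - intros x _. exact (hcover _ (hgraph x)).
  - intros x _. exact (hdisj _ (hgraph x)).
  - destruct p as [x y]. exact (hypograph_vertical_part f U V hsep x y hp Up).
  - destruct q as [x y]. exact (hypograph_vertical_part f V U (separation_sym _ _ _ hsep) x y hq Vq).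
Qed.

Definition third_avoiding (v : R) (I : R * R) : R * R :=
  let (a, b) := I in
  if Rlt_dec v ((a + b) / 2) then ((a + 2 * b) / 3, b) else (a, (2 * a + b) / 3).

Fixpoint nested_avoiding (u : nat -> R) (n : nat) : R * R :=
  match n with
  | O => (0, 1)
  | S k => third_avoiding (u k) (nested_avoiding u k)
  end.

Lemma third_avoiding_spec v a b : a < b ->
  let I := third_avoiding v (a, b) in
  a <= fst I /\ fst I < snd I /\ snd I <= b /\ (v < fst I \/ snd I < v).
Proof. intros hab. simpl. destruct Rlt_dec; simpl; lra. Qed.

Lemma nested_avoiding_step u n :
  let I := nested_avoiding u n in let J := nested_avoiding u (S n) in
  fst I < snd I /\ fst I <= fst J /\ fst J < snd J /\ snd J <= snd I /\
  (u n < fst J \/ snd J < u n).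
Proof.
  induction n as [|n IH]; simpl in *.
  - pose proof (third_avoiding_spec (u 0%nat) 0 1 ltac:(lra)). simpl in *. lra.
  - destruct (third_avoiding (u n) (nested_avoiding u n)) as [a b].
    pose proof (third_avoiding_spec (u (S n)) a b ltac:(simpl in IH; lra)). simpl in *. lra.
Qed.

Lemma nested_avoiding_mono u n m : (n <= m)%nat ->
  fst (nested_avoiding u n) <= fst (nested_avoiding u m) /\
  snd (nested_avoiding u m) <= snd (nested_avoiding u n).
Proof. induction 1; [lra|]. pose proof (nested_avoiding_step u m). simpl in *. lra. Qed.

Lemma nested_avoiding_fst_le_snd u n m :
  fst (nested_avoiding u n) <= snd (nested_avoiding u m).
Proof.
  destruct (Nat.le_ge_cases n m) as [h|h];
    pose proof (nested_avoiding_mono u _ _ h);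
    pose proof (nested_avoiding_step u n); pose proof (nested_avoiding_step u m);
    simpl in *; lra.
Qed.

(* The supremum of the left endpoints lies in every interval, hence differs from every [u n]. *)
Lemma R_sequence_not_surjective (u : nat -> R) : exists x, forall n, u n <> x.
Proof.
  set (E := fun x => exists n, x = fst (nested_avoiding u n)).
  destruct (completeness E) as [s [hub hlub]].
  - exists (snd (nested_avoiding u 0)). intros x [n ->]. apply nested_avoiding_fst_le_snd.
  - exists (fst (nested_avoiding u 0)), 0%nat. reflexivity.
  - exists s. intros n hn.
    assert (h1 : fst (nested_avoiding u (S n)) <= s) by (apply hub; exists (S n); reflexivity).
    assert (h2 : s <= snd (nested_avoiding u (S n))).
    { apply hlub. intros x [k ->]. apply nested_avoiding_fst_le_snd. }
    pose proof (nested_avoiding_step u n). simpl in *. lra.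
Qed.

Theorem mainTheorem11 (f : R -> R) :
  ((additive f /\ ~ continuity f) \/ everywhere_surjective f) ->
  (forall p q, hypograph f p -> hypograph f q ->
     (path_joined (hypograph f) p q <-> fst p = fst q)) /\
  ~ path_connected (hypograph f) /\
  ~ countably_many_path_components (hypograph f) /\
  connected2 (hypograph f).
Proof.
  intros hf.
  assert (hunb : locally_unbounded_above f /\ locally_unbounded_below f).
  { destruct hf as [[hadd hdisc] | hsurj]; [split | exact (everywhere_surjective_locally_unbounded f hsurj)].
    - exact (discontinuous_additive_locally_unbounded_above f hadd hdisc).
    - exact (discontinuous_additive_locally_unbounded_below f hadd hdisc). }
  destruct hunb as [habove hbelow].
  assert (hgraph : forall x, hypograph f (x, f x)) by (intros x; unfold hypograph; simpl; lra).
  assert (hcomp := fun p q => hypograph_path_joined_iff f p q hbelow).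
  split; [exact hcomp|]. split; [|split].
  - intros hpc. pose proof (proj1 (hcomp _ _ (hgraph 0) (hgraph 1)) (hpc _ _ (hgraph 0) (hgraph 1))).
    simpl in *. lra.
  - intros [c [hc hmeets]]. destruct (R_sequence_not_surjective (fun n => fst (c n))) as [x hx].
    destruct (hmeets _ (hgraph x)) as [n hn].
    exact (hx n (proj1 (hcomp _ _ (hc n) (hgraph x)) hn)).
  - exact (hypograph_connected f habove).
Qed.
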